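(* Let $c>0$. There exist constants $T_0>0$ and $r_0>0$ depending only on $c$ such that for all $T\ge T_0$ and all integers $\ell\ge1$, $$F_{T-r_0,c,\ell}\setminus C_\ell\ \subseteq\ E_{T,c}\setminus C_0\ \subseteq\ F_{T+r_0,c}.$$
   Context: $\mathcal C=\{x\in\mathbb R^{n+2}: x_1^2+\dots+x_{n+1}^2=x_{n+2}^2,\ x_{n+2}>0\}$, $n\ge1$. For $T,c>0$: $E_{T,c}=\{x\in\mathcal C:2x_{n+2}(x_{n+2}-x_{n+1})<c^2,\ 1\le x_{n+2}<\cosh T\}$; $F_{T,c}=\{x\in\mathcal C:x_{n+2}^2-x_{n+1}^2<c^2,\ c\le x_{n+2}+x_{n+1}<ce^T\}$; for integers $\ell\ge1$, $c_\ell=c\,(\ell/(\ell+1))^{1/2}$ and $F_{T,c,\ell}=\{x\in\mathcal C:x_{n+2}^2-x_{n+1}^2<c_\ell^2,\ c\le x_{n+2}+x_{n+1}<ce^T\}$; $C_0=\{x\in\mathcal C:x_{n+2}\le \tfrac{c^2+c}2+1\}$ and $C_\ell=\{x\in\mathcal C:|x_{n+1}|/x_{n+2}\le \ell/(\ell+1)\}\cup C_0$. *)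

From Stdlib Require Import Reals.
Open Scope R_scope.

(* A point x in R^{n+2} is a function x : nat -> R; the paper's coordinate
   x_k (1 <= k <= n+2) is x (k-1). Coordinates with index >= n+2 are ignored. *)

(* sum_{k=1}^{n+1} x_k^2 = sum_{i=0}^{n} (x i)^2 *)
Definition sqsum (n : nat) (x : nat -> R) : R := sum_f_R0 (fun i => (x i) ^ 2) n.

Definition xa (n : nat) (x : nat -> R) : R := x n.
Definition xb (n : nat) (x : nat -> R) : R := x (S n).

Definition cone (n : nat) (x : nat -> R) : Prop :=
  sqsum n x = (xb n x) ^ 2 /\ 0 < xb n x.

Definition E_set (n : nat) (T c : R) (x : nat -> R) : Prop :=
  cone n x /\ 2 * xb n x * (xb n x - xa n x) < c ^ 2
  /\ 1 <= xb n x /\ xb n x < cosh T.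

Definition F_set (n : nat) (T c : R) (x : nat -> R) : Prop :=
  cone n x /\ (xb n x) ^ 2 - (xa n x) ^ 2 < c ^ 2
  /\ c <= xb n x + xa n x /\ xb n x + xa n x < c * exp T.

Definition c_ell (c : R) (l : nat) : R := c * sqrt (INR l / INR (l + 1)).

Definition F_set_l (n : nat) (T c : R) (l : nat) (x : nat -> R) : Prop :=
  cone n x /\ (xb n x) ^ 2 - (xa n x) ^ 2 < (c_ell c l) ^ 2
  /\ c <= xb n x + xa n x /\ xb n x + xa n x < c * exp T.

Definition C0_set (n : nat) (c : R) (x : nat -> R) : Prop :=
  cone n x /\ xb n x <= (c ^ 2 + c) / 2 + 1.

Definition Cl_set (n : nat) (c : R) (l : nat) (x : nat -> R) : Prop :=
  (cone n x /\ Rabs (xa n x) / xb n x <= INR l / INR (l + 1)) \/ C0_set n c x.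

(* Write a = x_{n+1}, b = x_{n+2} and u = b + a, v = b - a.  On the cone
   |a| <= b, so u, v >= 0 and b^2 - a^2 = u v.  Outside C_0 the height b is
   large compared to c; then u >= c together with u v < c^2 forces a > 0, so
   b <= u <= 2 b, and the conditions on u in F and on b in E differ only by
   bounded factors, absorbed into the shift r_0.  The remaining point is the
   hyperbola condition: outside C_l one has u > (1 + l/(l+1)) b, which turns
   u v < c_l^2 into 2 b v < c^2; conversely 2 b v < c^2 gives u v <= 2 b v. *)

From Stdlib Require Import Reals Lra Psatz.
Open Scope R_scope.

Lemma sqsum_ge_last (n : nat) (x : nat -> R) : xa n x ^ 2 <= sqsum n x.
Proof.
  unfold sqsum, xa; destruct n as [|m]; simpl; [lra|].
  assert (0 <= sum_f_R0 (fun i => x i ^ 2) m) by (apply cond_pos_sum; intro; nra).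
  simpl in *; lra.
Qed.

Lemma cone_bounds (n : nat) (x : nat -> R) :
  cone n x -> - xb n x <= xa n x <= xb n x /\ 0 < xb n x.
Proof.
  intros [Hsq Hb]; pose proof (sqsum_ge_last n x) as Hab; rewrite Hsq in Hab.
  split; [split; nra | exact Hb].
Qed.

Lemma ratio_succ_bounds (l : nat) : 0 <= INR l / INR (l + 1) <= 1.
Proof.
  rewrite plus_INR; simpl.
  assert (0 <= INR l) by apply pos_INR.
  split.
  - unfold Rdiv; apply Rmult_le_pos; [lra|]; left; apply Rinv_0_lt_compat; lra.
  - apply (Rmult_le_reg_r (INR l + 1)); [lra|]; field_simplify; lra.
Qed.

Lemma c_ell_sqr (c : R) (l : nat) : c_ell c l ^ 2 = c ^ 2 * (INR l / INR (l + 1)).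
Proof.
  unfold c_ell; rewrite Rpow_mult_distr, pow2_sqrt; [reflexivity|].
  apply ratio_succ_bounds.
Qed.

Lemma not_C0_height (n : nat) (c : R) (x : nat -> R) :
  cone n x -> ~ C0_set n c x -> (c ^ 2 + c) / 2 + 1 < xb n x.
Proof.
  intros Hx HC0; apply Rnot_le_lt; intro Hb; exact (HC0 (conj Hx Hb)).
Qed.

Lemma not_Cl_slope (n : nat) (c : R) (l : nat) (x : nat -> R) :
  cone n x -> ~ Cl_set n c l x -> INR l / INR (l + 1) * xb n x < Rabs (xa n x).
Proof.
  intros Hx HCl; destruct (cone_bounds n x Hx) as [_ Hb].
  apply Rnot_le_lt; intro Ha; apply HCl; left; split; [exact Hx|].
  apply (Rmult_le_reg_r (xb n x)); [exact Hb|].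
  unfold Rdiv; rewrite Rmult_assoc, Rinv_l; lra.
Qed.

Lemma c_lt_of_C0_bound_lt (b c : R) : (c ^ 2 + c) / 2 + 1 < b -> c < b.
Proof. nra. Qed.

Lemma hyperbola_below_pos (a b c k : R) :
  0 < c -> c < b -> k <= 1 -> c <= b + a -> b ^ 2 - a ^ 2 < c ^ 2 * k -> 0 < a.
Proof.
  intros Hc Hcb Hk Hu Huv; apply Rnot_le_lt; intro Ha.
  assert (c * c <= (b + a) * (b - a)) by (apply Rmult_le_compat; lra).
  nra.
Qed.

(* From u > (1 + k) b and u v < c^2 k:  2 b v < 2 c^2 k / (1 + k) <= c^2. *)
Lemma steep_hyperbola_gap (a b c k : R) :
  0 < b -> a <= b -> 0 <= k <= 1 -> k * b < a -> b ^ 2 - a ^ 2 < c ^ 2 * k ->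
  2 * b * (b - a) < c ^ 2.
Proof.
  intros Hb Hab Hk Hka Huv.
  assert ((1 + k) * b * (b - a) <= (b + a) * (b - a)) by nra.
  nra.
Qed.

Lemma small_gap_hyperbola (a b c : R) :
  0 < c -> a <= b -> (c ^ 2 + c) / 2 + 1 < b -> 2 * b * (b - a) < c ^ 2 ->
  b ^ 2 - a ^ 2 < c ^ 2 /\ c <= b + a.
Proof.
  intros Hc Hab Hb Hv; split; [nra|].
  assert (b - a < 1) by nra.
  nra.
Qed.

Lemma half_exp_lt_cosh (T : R) : exp T / 2 < cosh T.
Proof. unfold cosh; pose proof (exp_pos (- T)); lra. Qed.

Lemma cosh_lt_exp (T : R) : 0 < T -> cosh T < exp T.
Proof.
  intro HT; unfold cosh.
  assert (exp (- T) < exp T) by (apply exp_increasing; lra).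
  lra.
Qed.

Lemma F_l_minus_Cl_sub_E_minus_C0 (n : nat) (T c r : R) (l : nat) (x : nat -> R) :
  0 < c -> 2 * c <= exp r ->
  F_set_l n (T - r) c l x -> ~ Cl_set n c l x -> E_set n T c x /\ ~ C0_set n c x.
Proof.
  intros Hc Hr [Hx [Huv [Hu HuT]]] HCl.
  assert (HC0 : ~ C0_set n c x) by (intro H; apply HCl; right; exact H).
  pose proof (not_C0_height n c x Hx HC0) as Hb.
  pose proof (not_Cl_slope n c l x Hx HCl) as Hslope.
  destruct (cone_bounds n x Hx) as [[_ Hab] Hb0].
  pose proof (ratio_succ_bounds l) as Hk.
  rewrite c_ell_sqr in Huv.
  pose proof (hyperbola_below_pos _ _ _ _ Hc (c_lt_of_C0_bound_lt _ _ Hb) (proj2 Hk)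
                Hu Huv) as Ha.
  rewrite Rabs_right in Hslope by lra.
  split; [|exact HC0].
  split; [exact Hx|]; split; [exact (steep_hyperbola_gap _ _ _ _ Hb0 Hab Hk Hslope Huv)|].
  split; [nra|].
  assert (HeT : exp (T - r) * exp r = exp T) by (rewrite <- exp_plus; f_equal; ring).
  pose proof (exp_pos (T - r)); pose proof (half_exp_lt_cosh T).
  nra.
Qed.

Lemma E_minus_C0_sub_F (n : nat) (T c r : R) (x : nat -> R) :
  0 < c -> 0 < T -> 2 < c * exp r ->
  E_set n T c x -> ~ C0_set n c x -> F_set n (T + r) c x.
Proof.
  intros Hc HT Hr [Hx [Hv [_ HbT]]] HC0.
  pose proof (not_C0_height n c x Hx HC0) as Hb.
  destruct (cone_bounds n x Hx) as [[_ Hab] _].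
  destruct (small_gap_hyperbola _ _ _ Hc Hab Hb Hv) as [Huv Hu].
  split; [exact Hx|]; split; [exact Huv|]; split; [exact Hu|].
  rewrite exp_plus.
  pose proof (cosh_lt_exp T HT); pose proof (exp_pos T).
  nra.
Qed.

Theorem lemma2p1 :
  forall c : R, 0 < c ->
  exists T0 r0 : R, 0 < T0 /\ 0 < r0 /\
    forall (n : nat), (1 <= n)%nat ->
    forall (T : R) (l : nat), T0 <= T -> (1 <= l)%nat ->
      (forall x : nat -> R,
         F_set_l n (T - r0) c l x /\ ~ Cl_set n c l x ->
         E_set n T c x /\ ~ C0_set n c x) /\
      (forall x : nat -> R,
         E_set n T c x /\ ~ C0_set n c x -> F_set n (T + r0) c x).
Proof.
  (* exp r0 > 1 + r0 exceeds both 2 c and 2 / c. *)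
  intros c Hc.
  assert (Hinv : 0 < 2 / c) by (apply Rdiv_lt_0_compat; lra).
  assert (Hexp := exp_ineq1 (2 / c + 2 * c) ltac:(lra)).
  assert (Hinv_c : 2 / c * c = 2) by (field; lra).
  exists 1, (2 / c + 2 * c); split; [lra|]; split; [lra|].
  intros n _ T l HT _; split.
  - intros x [HF HCl]; apply (F_l_minus_Cl_sub_E_minus_C0 n T c (2 / c + 2 * c) l);
      auto; lra.
  - intros x [HE HC0]; apply (E_minus_C0_sub_F n T c (2 / c + 2 * c)); auto; [lra|nra].
Qed.
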